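(* Let $K$ be a finite simplicial complex equipped with two assignments of edge lengths, giving discrete geodesic distance functions $f^1_p$ and $f^2_p$ for each vertex $p$ of $K$, and let $\epsilon=\max_{p\in\mathrm{Vert}(K)}\max_{q\in\mathrm{Vert}(K)}|f^1_p(q)-f^2_p(q)|$. Then for every homology class $h\in H_d(K;\mathbb{Z}_2)$, $|S^1(h)-S^2(h)|\le\epsilon$, where $S^1,S^2$ denote the size of $h$ computed with respect to $f^1$ and $f^2$ respectively.
   Context: For a given edge-length assignment, $f_p(q)$ is the length of a shortest path from vertex $p$ to vertex $q$ in the 1-skeleton of $K$, extended to simplices by $f_p(\sigma)=\max_{q\in\mathrm{Vert}(\sigma)}f_p(q)$. The geodesic ball $B_p^t=\{\sigma\in K: f_p(\sigma)\le t\}$ is a subcomplex; it carries a class $h$ if it contains some cycle representing $h$ (over $\mathbb{Z}_2$). $r_{f_p}(h)$ is the smallest $t$ such that $B_p^t$ carries $h$, and the size of $h$ is $S(h)=\min_{p\in\mathrm{Vert}(K)}r_{f_p}(h)$. *)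

From HB Require Import structures.
From mathcomp Require Import all_boot all_order all_algebra.
Set Implicit Arguments. Unset Strict Implicit. Unset Printing Implicit Defensive.
Import Order.TTheory GRing.Theory Num.Theory.
Local Open Scope ring_scope.

Section Complexes.
Variables (R : realFieldType) (V : finType).
Implicit Types (K L c z b : {set {set V}}).

Definition is_complex K : Prop :=
  (forall s : {set V}, s \in K -> s != set0) /\
  (forall s t : {set V}, s \in K -> t \subset s -> t != set0 -> t \in K).

Definition vert K (v : V) : bool := [set v] \in K.

Definition adj K (u v : V) : bool := (u != v) && ([set u; v] \in K).

(* length of a walk p = v0, v1, ..., vk (s = [:: v1; ...; vk]) *)
Definition walk_len (l : {set V} -> R) (p : V) (s : seq V) : R :=
  \sum_(e <- zip (p :: s) s) l [set e.1; e.2].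

Definition is_walk K (p q : V) (s : seq V) : bool :=
  path (adj K) p s && (last p s == q).

Definition edge_lengths K (l : {set V} -> R) : Prop :=
  forall u v, adj K u v -> 0 < l [set u; v].

Definition is_geodesic K (l : {set V} -> R) (f : V -> V -> R) : Prop :=
  forall p q, vert K p -> vert K q ->
    (exists2 s, is_walk K p q s & walk_len l p s = f p q) /\
    (forall s, is_walk K p q s -> f p q <= walk_len l p s).

Definition fsimp (f : V -> V -> R) (p : V) (s : {set V}) : R :=
  \big[Num.max/0]_(q in s) f p q.

Definition ball K (f : V -> V -> R) (p : V) (t : R) : {set {set V}} :=
  [set s in K | fsimp f p s <= t].

(* Z_2-chains are sets of simplices; sum is symmetric difference. *)
Definition chain_add c c' : {set {set V}} := (c :\: c') :|: (c' :\: c).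

(* boundary over Z_2 (non-augmented) *)
Definition bd c : {set {set V}} :=
  [set t : {set V} | (0 < #|t|)%N &&
     odd #|[set s in c | (t \subset s) && (#|s| == #|t|.+1)]| ].

(* c is a d-chain of L (all simplices of dimension d, i.e. d+1 vertices) *)
Definition is_chain L (d : nat) c : Prop :=
  c \subset L /\ (forall s : {set V}, s \in c -> #|s| = d.+1).

Definition is_cycle L (d : nat) c : Prop := is_chain L d c /\ bd c = set0.

Definition homologous K (d : nat) c c' : Prop :=
  exists2 b, is_chain K d.+1 b & bd b = chain_add c c'.

Definition carries K L (d : nat) z : Prop :=
  exists2 c, is_cycle L d c & homologous K d c z.

(* r_{f_p}(h) = t : the smallest t such that B_p^t carries h = [z] *)
Definition is_radius K (f : V -> V -> R) (d : nat) z (p : V) (t : R) : Prop :=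
  carries K (ball K f p t) d z /\
  (forall t', carries K (ball K f p t') d z -> t <= t').

Definition is_size K (f : V -> V -> R) (d : nat) z (S : R) : Prop :=
  (exists2 p, vert K p & is_radius K f d z p S) /\
  (forall p r, vert K p -> is_radius K f d z p r -> S <= r).

Definition dist_eps K (f1 f2 : V -> V -> R) : R :=
  \big[Num.max/0]_(p | vert K p) \big[Num.max/0]_(q | vert K q) `|f1 p q - f2 p q|.

End Complexes.

From HB Require Import structures.
From mathcomp Require Import all_boot all_order all_algebra.
From mathcomp Require Import lra.
From Stdlib Require Import Classical Wf_nat.
Set Implicit Arguments. Unset Strict Implicit. Unset Printing Implicit Defensive.
Import Order.TTheory GRing.Theory Num.Theory.
Local Open Scope ring_scope.

(* Only the closeness of f1 and f2 on vertices matters, not that they are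
   geodesic distances.  A simplex of K has all its vertices in Vert(K), so
   f2_p(s) <= f1_p(s) + eps and hence B1_p^t is contained in B2_p^(t + eps).
   If B1_p^S1 carries h for an optimal p, then so does B2_p^(S1 + eps), whence
   S2 <= r_{f2_p}(h) <= S1 + eps; the other inequality is symmetric.  The one
   delicate point is that r_{f2_p}(h) exists: only finitely many balls occur,
   and a ball of smallest cardinality carrying h yields the least radius,
   provided the empty complex does not carry h (which the existence of S1
   guarantees, as otherwise every negative t would be a radius). *)

Lemma ex_minimal_nat (P : nat -> Prop) :
  (exists n, P n) -> exists2 n, P n & forall m, P m -> (n <= m)%N.
Proof.
move=> exP.
have [n [[Pn minn] _]] :=
  dec_inh_nat_subset_has_unique_least_element P (fun n => classic (P n)) exP.
by exists n => // m /minn /ssrnat.leP.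
Qed.

Section Balls.
Variables (R : realFieldType) (V : finType) (K : {set {set V}}).
Variables (d : nat) (z : {set {set V}}).
Implicit Types (f : V -> V -> R) (p q : V) (s : {set V}) (t : R).

Lemma fsimp_ge0 f p s : 0 <= fsimp f p s.
Proof. exact: bigmax_ge_id. Qed.

Lemma le_fsimp f p s q : q \in s -> f p q <= fsimp f p s.
Proof. exact: le_bigmax_cond. Qed.

Lemma subset_ball f p t t' : t <= t' -> ball K f p t \subset ball K f p t'.
Proof.
move=> le_tt'; apply/subsetP => s; rewrite !inE => /andP[-> le_st] /=.
exact: le_trans le_tt'.
Qed.

Lemma ball_neg f p t : t < 0 -> ball K f p t = set0.
Proof.
move=> t_lt0; apply/setP => s; rewrite !inE.
by rewrite [_ <= t]leNgt (lt_le_trans t_lt0 (fsimp_ge0 f p s)) andbF.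
Qed.

Lemma carries_subset (L L' : {set {set V}}) :
  L \subset L' -> carries K L d z -> carries K L' d z.
Proof.
move=> sLL' [c [[cL c_dim] bd_c] hom_c].
by exists c => //; split => //; split => //; exact: subset_trans sLL'.
Qed.

(* The smallest level at which the ball B_p^t is attained. *)
Definition ball_level f p t : R := \big[Num.max/0]_(s in ball K f p t) fsimp f p s.

Lemma ball_level_le f p t : 0 <= t -> ball_level f p t <= t.
Proof. by move=> t_ge0; apply: bigmax_le => // s; rewrite inE => /andP[]. Qed.

Lemma ball_ball_level f p t : 0 <= t -> ball K f p (ball_level f p t) = ball K f p t.
Proof.
move=> t_ge0; apply/eqP; rewrite eqEsubset subset_ball ?ball_level_le //=.
apply/subsetP => s s_ball; have := s_ball; rewrite !inE => /andP[-> _] /=.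
exact: le_bigmax_cond.
Qed.

Lemma carries_ball_ge0 f p t :
  ~ carries K set0 d z -> carries K (ball K f p t) d z -> 0 <= t.
Proof.
move=> not_carries0 carries_t; rewrite leNgt; apply/negP => /(ball_neg f p) ball0.
by apply: not_carries0; rewrite -ball0.
Qed.

Lemma radius_not_carries0 f p r : is_radius K f d z p r -> ~ carries K set0 d z.
Proof.
move=> [_ min_r] carries0.
have carries_neg u : u < 0 -> carries K (ball K f p u) d z by move/ball_neg ->.
have r_le : r <= -1 by apply/min_r/carries_neg; lra.
have : r <= r - 1 by apply/min_r/carries_neg; lra.
lra.
Qed.

Lemma radius_exists f p t :
  ~ carries K set0 d z -> carries K (ball K f p t) d z ->
  exists r, is_radius K f d z p r.
Proof.
move=> not_carries0 carries_t.
have [_ [t0 [carries_t0 <-]] min_card] :=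
  @ex_minimal_nat (fun n => exists t, carries K (ball K f p t) d z /\ #|ball K f p t| = n)
                 (ex_intro _ _ (ex_intro _ t (conj carries_t erefl))).
have t0_ge0 := carries_ball_ge0 not_carries0 carries_t0.
exists (ball_level f p t0); split; first by rewrite ball_ball_level.
move=> t' carries_t'; rewrite leNgt; apply/negP => lt_t'.
have t'_ge0 := carries_ball_ge0 not_carries0 carries_t'.
have sub : ball K f p t' \subset ball K f p t0.
  by rewrite -(ball_ball_level f p t0_ge0); apply/subset_ball/ltW.
have eq_ball : ball K f p t' = ball K f p t0.
  apply/eqP; rewrite eqEcard sub /=.
  exact: min_card (ex_intro _ t' (conj carries_t' erefl)).
have := ball_level_le f p t'_ge0.
by rewrite /ball_level eq_ball -/(ball_level f p t0) leNgt lt_t'.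
Qed.

End Balls.

Section Stability.
Variables (R : realFieldType) (V : finType) (K : {set {set V}}).
Hypothesis complexK : is_complex K.
Variables (f1 f2 : V -> V -> R).
Implicit Types (p q : V) (s : {set V}) (t : R).

Lemma vert_of_simplex s q : s \in K -> q \in s -> vert K q.
Proof.
move=> sK qs; apply: complexK.2 sK _ _; first by rewrite sub1set.
by apply/set0Pn; exists q; rewrite inE.
Qed.

Lemma dist_eps_ge0 : 0 <= dist_eps K f1 f2.
Proof. exact: bigmax_ge_id. Qed.

Lemma dist_epsC : dist_eps K f1 f2 = dist_eps K f2 f1.
Proof. by apply: eq_bigr => p _; apply: eq_bigr => q _; rewrite distrC. Qed.

Lemma le_dist_eps p q : vert K p -> vert K q -> `|f1 p q - f2 p q| <= dist_eps K f1 f2.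
Proof.
by move=> vp vq; apply: bigmax_sup vp _; apply: le_bigmax_cond.
Qed.

Lemma fsimp_le_add_dist_eps p s :
  vert K p -> s \in K -> fsimp f2 p s <= fsimp f1 p s + dist_eps K f1 f2.
Proof.
move=> vp sK; apply: bigmax_le => [|q qs].
  by rewrite addr_ge0 ?fsimp_ge0 ?dist_eps_ge0.
have := le_dist_eps vp (vert_of_simplex sK qs); rewrite ler_norml => /andP[+ _].
have := le_fsimp f1 p qs; lra.
Qed.

Lemma ball_subset_dist_eps p t :
  vert K p -> ball K f1 p t \subset ball K f2 p (t + dist_eps K f1 f2).
Proof.
move=> vp; apply/subsetP => s; rewrite !inE => /andP[sK le_st]; rewrite sK /=.
by apply: le_trans (fsimp_le_add_dist_eps vp sK) _; rewrite lerD2r.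
Qed.

Lemma size_le_add_dist_eps d z S1 S2 :
  is_size K f1 d z S1 -> is_size K f2 d z S2 -> S2 <= S1 + dist_eps K f1 f2.
Proof.
move=> [[p vp radius1] _] [_ min_S2].
have carries2 : carries K (ball K f2 p (S1 + dist_eps K f1 f2)) d z.
  exact: carries_subset (ball_subset_dist_eps _ vp) radius1.1.
have [r radius2] := radius_exists (radius_not_carries0 radius1) carries2.
exact: le_trans (min_S2 _ _ vp radius2) (radius2.2 _ carries2).
Qed.

End Stability.

Theorem theorem3p1 (R : realFieldType) (V : finType) (K : {set {set V}})
  (HK : is_complex K)
  (l1 l2 : {set V} -> R) (Hl1 : edge_lengths K l1) (Hl2 : edge_lengths K l2)
  (f1 f2 : V -> V -> R) (Hf1 : is_geodesic K l1 f1) (Hf2 : is_geodesic K l2 f2)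
  (d : nat) (z : {set {set V}}) (Hz : is_cycle K d z)
  (S1 S2 : R) (HS1 : is_size K f1 d z S1) (HS2 : is_size K f2 d z S2) :
  `|S1 - S2| <= dist_eps K f1 f2.
Proof.
have le21 := size_le_add_dist_eps HK HS1 HS2.
have le12 := size_le_add_dist_eps HK HS2 HS1.
rewrite dist_epsC in le12.
rewrite ler_norml; apply/andP; split; lra.
Qed.
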